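(* Let $H$ be a set of $n$ objects with an associated decomposition scheme of combinatorial dimension $b$ that complies with the Clarkson–Shor framework. Assume its local growth function satisfies $u(m)\le 2^\alpha m^\beta$ for some real $\alpha$ and some $\beta\ge1$. Let $r>1$ and $\varphi\in(0,1)$. Let $R$ be a $\rho$-sample from $H$, where $$\rho\ \ge\ \max\Bigl(4r\bigl(b\ln 3+(\alpha-\beta)\ln 2+\ln\tfrac1\varphi\bigr),\ 8r\beta\ln(4r\beta)\Bigr).$$ Then, with probability at least $1-\varphi$, $\mathcal{CD}(R)$ is a $(1/r)$-cutting, i.e., every cell $\sigma\in\mathcal{CD}(R)$ satisfies $|K(\sigma)|\le n/r$.
   Context: Clarkson–Shor framework. $H$ is a finite set of objects embedded in some space $E$. Every subset $I\subseteq H$ determines a set $\mathcal{CD}(I)$ of cells. Combinatorial dimension: there is an integer $b>0$ such that for every $I\subseteq H$ and every $\sigma\in\mathcal{CD}(I)$ there is $J\subseteq I$ with $|J|\le b$ and $\sigma\in\mathcal{CD}(J)$. A smallest such $J$ is a defining set $D(\sigma)$ (any choice may be used). The least such $b$ is the combinatorial dimension. Conflict list: $f\in H$ conflicts with $\sigma$ if $\sigma\notin\mathcal{CD}(D(\sigma)\cup\{f\})$, and $K(\sigma)$ is the set of conflicting objects. Compliance means both axioms hold: (i) for every $R\subseteq H$ and every $\sigma\in\mathcal{CD}(R)$, some defining set $D(\sigma)\subseteq R$, and $K(\sigma)\cap R=\emptyset$; (ii) if $D(\sigma)\subseteq R$ for some defining set and $K(\sigma)\cap R=\emptyset$, then $\sigma\in\mathcal{CD}(R)$.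 Local growth function: $u(m)=\max_{I\subseteq H,|I|=m}|\mathcal{CD}(I)|$. A $\rho$-sample is the set of elements obtained by $\rho$ independent uniform draws from $H$, with repetition. *)

From Stdlib Require Import Reals.
From mathcomp Require Import all_boot.
Set Implicit Arguments. Unset Strict Implicit. Unset Printing Implicit Defensive.

(* Objects: H = the finite type T (n = #|T|).  Cells: a finite type C
   (only the finitely many cells in some CD(I), I ⊆ H, matter).
   CD I : {set C} is the set of cells determined by I. *)

Definition comb_dim_bound (T C : finType) (CD : {set T} -> {set C}) (b : nat) :=
  forall (I : {set T}) (s : C), s \in CD I ->
    exists J : {set T}, [/\ J \subset I, (#|J| <= b)%N & s \in CD J].

Definition comb_dim (T C : finType) (CD : {set T} -> {set C}) (b : nat) :=
  [/\ (0 < b)%N, comb_dim_bound CD b &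
      forall b', (0 < b')%N -> comb_dim_bound CD b' -> (b <= b')%N].

Definition is_def_set (T C : finType) (CD : {set T} -> {set C}) (s : C) (J : {set T}) :=
  s \in CD J /\ forall J' : {set T}, s \in CD J' -> (#|J| <= #|J'|)%N.

Definition def_set_choice (T C : finType) (CD : {set T} -> {set C}) (D : C -> {set T}) :=
  forall (I : {set T}) (s : C), s \in CD I -> is_def_set CD s (D s).

Definition conflict (T C : finType) (CD : {set T} -> {set C}) (D : C -> {set T}) (s : C)
  : {set T} := [set f | s \notin CD (f |: D s)].

Definition complies (T C : finType) (CD : {set T} -> {set C}) (D : C -> {set T}) :=
  (forall (R : {set T}) (s : C), s \in CD R ->
     (exists J, is_def_set CD s J /\ J \subset R) /\ conflict CD D s :&: R = set0) /\
  (forall (R : {set T}) (s : C),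
     (exists J, is_def_set CD s J /\ J \subset R) -> conflict CD D s :&: R = set0 ->
     s \in CD R).

Definition local_growth (T C : finType) (CD : {set T} -> {set C}) (m : nat) : nat :=
  \max_(I : {set T} | #|I| == m) #|CD I|.

(* the set of elements of a rho-sample (rho draws with repetition) *)
Definition sample_set (T : finType) (rho : nat) (t : {ffun 'I_rho -> T}) : {set T} :=
  [set t i | i : 'I_rho].

Definition is_cutting (T C : finType) (CD : {set T} -> {set C}) (D : C -> {set T})
  (r : R) (Rs : {set T}) : bool :=
  [forall s : C, (s \in CD Rs) ==>
     (if Rle_dec (INR #|conflict CD D s|) (Rdiv (INR #|T|) r) then true else false)].

(* probability (uniform product measure on H^rho) that a rho-sample gives a cutting *)
Definition prob_cutting (T C : finType) (CD : {set T} -> {set C}) (D : C -> {set T})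
  (r : R) (rho : nat) : R :=
  Rdiv (INR #|[set t : {ffun 'I_rho -> T} | is_cutting CD D r (sample_set t)]|)
       (INR (expn #|T| rho)).

From Stdlib Require Import Reals Lra Psatz.
From mathcomp Require Import all_boot zify.
Set Implicit Arguments. Unset Strict Implicit. Unset Printing Implicit Defensive.

(* Color each of the rho draws red (one color) or blue (two colors), and call a coloring
   witnessed when some heavy cell s (|K(s)| > n/r) of CD(red draws) has a conflict list
   missing every blue draw.  If the sample R is not a (1/r)-cutting, take a heavy cell of
   CD(R) and color red the at most b draws carrying a defining set of it: by the two
   compliance axioms each of the 3^(rho-b) ways of coloring the other draws is witnessed.
   Conversely, once the red pattern is fixed, a witnessed coloring is determined by a heavy
   cell of CD(A) for the red set A (at most 2^alpha rho^beta choices) and, for each blue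
   draw, a color and an object outside that cell's conflict list (fewer than 2(n - n/r)
   choices).  Summing over red patterns,
     #(bad samples) * 3^(rho-b) <= 2^alpha rho^beta (n + 2(n - n/r))^rho,
   so the failure probability is at most 3^b 2^alpha rho^beta (1 - 2/(3r))^rho <= phi. *)

Lemma card_family_prod (aT rT : finType) (F : aT -> pred rT) :
  #|(family F : simpl_pred {ffun aT -> rT})| = \prod_x #|F x|.
Proof. by rewrite card_family foldrE big_image. Qed.

Lemma sum_card_fibers (X Y : finType) (f : X -> Y) (P : pred X) :
  \sum_y #|[set x | (f x == y) && P x]| = #|[set x | P x]|.
Proof.
rewrite -sum1_card (partition_big f predT) //=.
apply: eq_bigr => y _; rewrite -sum1_card; apply: eq_bigl => x.
by rewrite !inE andbC.
Qed.

Lemma card_le_sum_cover (X I : finType) (P : pred X) (Q : pred I) (A : I -> pred X) :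
  (forall x, P x -> exists2 i, Q i & x \in A i) ->
  #|[set x | P x]| <= \sum_(i | Q i) #|A i|.
Proof.
move=> cover; rewrite -sum1_card big_mkcond /=.
apply: (@leq_trans (\sum_x \sum_(i | Q i) (x \in A i : nat))).
  apply: leq_sum => x _; rewrite inE; case: ifP => // /cover [i Qi xAi].
  by rewrite (bigD1 i) //= xAi.
rewrite exchange_big /=; apply: leq_sum => i _.
by rewrite -big_mkcond sum1_card.
Qed.

Section ColoredSamples.

Variables (T C : finType) (CD : {set T} -> {set C}) (D : C -> {set T}).
Variables (bad : pred C) (rho : nat).

Local Notation K := (conflict CD D).
Local Notation sample := {ffun 'I_rho -> T}.
Local Notation coloring := {ffun 'I_rho -> T * 'I_3}.

(* Color [ord0] is red; the two other colors are blue. *)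
Definition uncolor (g : coloring) : sample := [ffun i => (g i).1].

Definition red_part (g : coloring) : {ffun 'I_rho -> option T} :=
  [ffun i => if (g i).2 == ord0 then Some (g i).1 else None].

Definition some_set (a : {ffun 'I_rho -> option T}) : {set T} :=
  [set x | Some x \in codom a].

Definition blue_set (g : coloring) : {set T} :=
  [set x | [exists i, ((g i).2 != ord0) && ((g i).1 == x)]].

Definition witnessed (g : coloring) : bool :=
  (some_set (red_part g) != set0) &&
  [exists s, [&& s \in CD (some_set (red_part g)), bad s & K s :&: blue_set g == set0]].

Lemma in_some_set (a : {ffun 'I_rho -> option T}) (x : T) :
  (x \in some_set a) = [exists i, a i == Some x].
Proof.
rewrite inE; apply/codomP/existsP => [[i /esym/eqP]|[i /eqP <-]]; first by exists i.
by exists i.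
Qed.

Lemma card_some_set (a : {ffun 'I_rho -> option T}) : #|some_set a| <= rho.
Proof.
rewrite -(card_imset _ Some_inj) -[rho]card_ord -(size_codom a).
apply: leq_trans (card_size _); apply: subset_leq_card.
apply/subsetP => z /imsetP [x]; rewrite inE => xa ->; exact: xa.
Qed.

Lemma some_set_red_part_sub (g : coloring) : some_set (red_part g) \subset sample_set (uncolor g).
Proof.
apply/subsetP => x; rewrite in_some_set => /existsP [i]; rewrite ffunE.
by case: ifP => // _ /eqP [<-]; apply/imsetP; exists i; rewrite ?ffunE.
Qed.

Lemma blue_set_sub (g : coloring) : blue_set g \subset sample_set (uncolor g).
Proof.
apply/subsetP => x; rewrite inE => /existsP [i /andP [_ /eqP <-]].
by apply/imsetP; exists i; rewrite ?ffunE.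
Qed.

Lemma small_index_cover (i0 : 'I_rho) (b : nat) (t : sample) (J : {set T}) :
  0 < b -> J \subset sample_set t -> #|J| <= b ->
  exists P : {set 'I_rho}, [/\ P != set0, #|P| <= b & J \subset t @: P].
Proof.
move=> b_gt0 JR Jb; have [->|/set0Pn [x0 x0J]] := eqVneq J set0.
  exists [set i0]; rewrite cards1 sub0set; split => //.
  by apply/set0Pn; exists i0; rewrite inE.
pose pos x := odflt i0 [pick i | t i == x].
have posK x : x \in J -> t (pos x) = x.
  move=> /(subsetP JR) /imsetP [i _ ->]; rewrite /pos.
  by case: pickP => [j /eqP //|/(_ i)]; rewrite eqxx.
exists (pos @: J); split.
- by apply/set0Pn; exists (pos x0); apply: imset_f.
- exact: leq_trans (leq_imset_card _ _) Jb.
- by apply/subsetP => x xJ; rewrite -(posK x xJ) !imset_f.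
Qed.

Definition colorings_red_on (t : sample) (P : {set 'I_rho}) : simpl_pred coloring :=
  family (fun i => if i \in P then pred1 (t i, ord0) else [pred z | z.1 == t i]).

Lemma card_colorings_red_on (t : sample) (P : {set 'I_rho}) :
  #|colorings_red_on t P| = 3 ^ (rho - #|P|).
Proof.
rewrite card_family_prod.
rewrite (eq_bigr (fun i => if i \in ~: P then 3 else 1)); last first.
  move=> i _; rewrite inE; case: (i \in P) => /=; first by rewrite card1.
  rewrite (eq_card (B := setX [set t i] [set: 'I_3])); last by move=> [x c]; rewrite !inE andbT.
  by rewrite cardsX cards1 cardsT card_ord.
rewrite -big_mkcond prod_nat_const; congr (3 ^ _).
by have := cardsC P; rewrite card_ord; lia.
Qed.

Lemma colorings_red_on_witnessed (t : sample) (P : {set 'I_rho}) (s : C) (J : {set T}) :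
  complies CD D -> P != set0 -> is_def_set CD s J -> J \subset t @: P ->
  s \in CD (sample_set t) -> bad s ->
  forall g, g \in colorings_red_on t P -> (uncolor g == t) && witnessed g.
Proof.
move=> [compl_i compl_ii] /set0Pn [i0 i0P] defJ JP sR bad_s g /familyP gP.
have red_P i : i \in P -> g i = (t i, ord0).
  by move=> iP; have := gP i; rewrite iP => /eqP.
have gt : uncolor g = t.
  apply/ffunP => i; rewrite ffunE; have := gP i.
  by case: (i \in P) => /eqP ->.
have PA : t @: P \subset some_set (red_part g).
  apply/subsetP => _ /imsetP [i iP ->]; rewrite in_some_set; apply/existsP; exists i.
  by rewrite ffunE red_P.
have avoid (X : {set T}) : X \subset sample_set t -> K s :&: X = set0.
  by move=> XR; apply/eqP; rewrite -subset0 -(compl_i _ _ sR).2 setIS.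
rewrite gt eqxx /= /witnessed; apply/andP; split.
  by apply/set0Pn; exists (t i0); apply: subsetP PA _ (imset_f _ i0P).
have AR : some_set (red_part g) \subset sample_set t by rewrite -gt some_set_red_part_sub.
have BR : blue_set g \subset sample_set t by rewrite -gt blue_set_sub.
apply/existsP; exists s; rewrite bad_s (avoid _ BR) eqxx !andbT.
apply: compl_ii; last exact: avoid.
by exists J; split; last exact: subset_trans JP PA.
Qed.

Lemma card_uncolor_fiber_ge (i0 : 'I_rho) (b : nat) (t : sample) :
  0 < b -> comb_dim_bound CD b -> complies CD D ->
  [exists s, (s \in CD (sample_set t)) && bad s] ->
  3 ^ (rho - b) <= #|[set g | (uncolor g == t) && witnessed g]|.
Proof.
move=> b_gt0 dim_b compl /existsP [s /andP [sR bad_s]].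
have [[J [defJ JR]] _] := compl.1 _ _ sR.
have Jb : #|J| <= b.
  by have [J' [_ J'b sJ']] := dim_b _ _ sR; exact: leq_trans (defJ.2 _ sJ') J'b.
have [P [Pn0 Pb JP]] := small_index_cover i0 b_gt0 JR Jb.
apply: (@leq_trans #|colorings_red_on t P|).
  by rewrite card_colorings_red_on leq_pexp2l //; lia.
apply: subset_leq_card; apply/subsetP => g gP; rewrite inE.
exact: colorings_red_on_witnessed compl Pn0 defJ JP sR bad_s g gP.
Qed.

Definition colorings_avoiding (a : {ffun 'I_rho -> option T}) (s : C) : simpl_pred coloring :=
  family (fun i : 'I_rho => (if a i is Some x then pred1 (x, ord0)
                   else [pred z | (z.2 != ord0) && (z.1 \notin K s)]) : pred (T * 'I_3)).

Lemma witnessed_avoiding (g : coloring) :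
  witnessed g ->
  exists2 s, (s \in CD (some_set (red_part g))) && bad s & g \in colorings_avoiding (red_part g) s.
Proof.
case/andP=> _ /existsP [s /and3P [sA bad_s /eqP KB]].
exists s; first by rewrite sA bad_s.
apply/familyP => i; rewrite ffunE; case E : (g i) => [y c] /=.
case: eqP => [->|/eqP c0]; first by rewrite inE.
rewrite inE /= c0 /=; apply/negP => yK.
have : y \in K s :&: blue_set g.
  by rewrite inE yK inE; apply/existsP; exists i; rewrite E /= c0 eqxx.
by rewrite KB inE.
Qed.

Lemma card_colorings_avoiding (a : {ffun 'I_rho -> option T}) (s : C) (N0 : nat) :
  #|T| - #|K s| <= N0 ->
  #|colorings_avoiding a s| <= \prod_i (if a i is Some _ then 1 else 2 * N0).
Proof.
move=> KN0; rewrite card_family_prod; apply: leq_prod => i _.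
case: (a i) => [x|]; first by rewrite card1.
rewrite (eq_card (B := setX (~: K s) [set~ ord0])); last first.
  by move=> [x c]; rewrite !inE andbC.
rewrite cardsX cardsC1 card_ord mulnC leq_mul2l /=.
by have := cardsC (K s); lia.
Qed.

Lemma card_red_part_fiber_le (a : {ffun 'I_rho -> option T}) (U0 N0 : nat) :
  (forall I : {set T}, I != set0 -> #|I| <= rho -> #|CD I| <= U0) ->
  (forall s, bad s -> #|T| - #|K s| <= N0) ->
  #|[set g | (red_part g == a) && witnessed g]| <=
    U0 * \prod_i (if a i is Some _ then 1 else 2 * N0).
Proof.
move=> cells_U0 bad_N0.
have [A0|An0] := eqVneq (some_set a) set0.
  rewrite (eq_card (B := pred0)) ?card0 // => g; rewrite !inE.
  by case: eqP => //= ga; rewrite /witnessed ga A0 eqxx.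
set W := \prod_i _.
apply: (@leq_trans (\sum_(s | (s \in CD (some_set a)) && bad s) #|colorings_avoiding a s|)).
  apply: card_le_sum_cover => g /andP [/eqP <-]; exact: witnessed_avoiding.
apply: (@leq_trans (\sum_(s | (s \in CD (some_set a)) && bad s) W)).
  by apply: leq_sum => s /andP [_ /bad_N0]; exact: card_colorings_avoiding.
rewrite sum_nat_const leq_mul2r; apply/orP; right.
apply: leq_trans (cells_U0 _ An0 (card_some_set a)).
by apply: subset_leq_card; apply/subsetP => s /andP [].
Qed.

Lemma card_bad_samples_le (i0 : 'I_rho) (b U0 N0 : nat) :
  0 < b -> comb_dim_bound CD b -> complies CD D ->
  (forall I : {set T}, I != set0 -> #|I| <= rho -> #|CD I| <= U0) ->
  (forall s, bad s -> #|T| - #|K s| <= N0) ->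
  #|[set t : sample | [exists s, (s \in CD (sample_set t)) && bad s]]| * 3 ^ (rho - b)
    <= U0 * (#|T| + 2 * N0) ^ rho.
Proof.
move=> b_gt0 dim_b compl cells_U0 bad_N0.
rewrite -sum1_card big_distrl /=.
apply: (@leq_trans (\sum_t #|[set g | (uncolor g == t) && witnessed g]|)).
  rewrite [X in X <= _]big_mkcond /=; apply: leq_sum => t _.
  rewrite inE; case: ifP => // t_bad; rewrite mul1n.
  exact: (card_uncolor_fiber_ge i0 b_gt0 dim_b compl t_bad).
rewrite sum_card_fibers -(sum_card_fibers red_part).
apply: (@leq_trans (\sum_(a : {ffun 'I_rho -> option T})
                      U0 * \prod_i (if a i is Some _ then 1 else 2 * N0))).
  by apply: leq_sum => a _; apply: card_red_part_fiber_le.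
rewrite -big_distrr /= leq_mul2l; apply/orP; right.
(* expand the product of the per-draw sums [n + 2 N0] over all red patterns *)
rewrite -(bigA_distr_bigA (fun (i : 'I_rho) (z : option T) =>
                             if z is Some _ then 1 else 2 * N0)) /=.
rewrite prod_nat_const card_ord (bigD1 None) //= addnC.
by rewrite (eq_bigr (fun _ => 1)) ?sum1_card ?cardC1 ?card_option //; case.
Qed.

End ColoredSamples.

Local Open Scope R_scope.

Lemma INR_addn (m n : nat) : INR (m + n) = INR m + INR n.
Proof. by rewrite -plusE plus_INR. Qed.

Lemma INR_muln (m n : nat) : INR (m * n) = INR m * INR n.
Proof. by rewrite -multE mult_INR. Qed.

Lemma INR_expn (m n : nat) : INR (m ^ n) = INR m ^ n.
Proof. by elim: n => [|n IHn]; rewrite ?expn0 // expnS INR_muln IHn. Qed.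

Lemma INR_leq (m n : nat) : (m <= n)%N -> INR m <= INR n.
Proof. by move/leP; apply: le_INR. Qed.

Section Cuttings.

Variables (T C : finType) (CD : {set T} -> {set C}) (D : C -> {set T}).

Local Notation K := (conflict CD D).

Definition heavy (r : R) (s : C) : bool :=
  if Rle_dec (INR #|K s|) (INR #|T| / r) then false else true.

Lemma not_cutting_heavy (r : R) (Rs : {set T}) :
  ~~ is_cutting CD D r Rs = [exists s, (s \in CD Rs) && heavy r s].
Proof.
rewrite negb_forall; apply: eq_existsb => s.
by rewrite negb_imply /heavy; case: Rle_dec.
Qed.

Lemma prob_cutting_complement (r : R) (rho : nat) : (0 < #|T|)%N ->
  prob_cutting CD D r rho =
  1 - INR #|[set t : {ffun 'I_rho -> T} | [exists s, (s \in CD (sample_set t)) && heavy r s]]|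
        / INR (#|T| ^ rho).
Proof.
move=> n_gt0; rewrite /prob_cutting; set bad := [set t | [exists s, _]].
have -> : [set t : {ffun 'I_rho -> T} | is_cutting CD D r (sample_set t)] = ~: bad.
  by apply/setP => t; rewrite !inE -not_cutting_heavy negbK.
have split_samples := cardsC bad; rewrite card_ffun card_ord addnC in split_samples.
have pos : 0 < INR (#|T| ^ rho) by apply: lt_0_INR; apply/ltP; rewrite expn_gt0 n_gt0.
rewrite -split_samples INR_addn in pos *; field; lra.
Qed.

Definition max_cells (rho : nat) : nat :=
  \max_(I : {set T} | (I != set0) && (#|I| <= rho)%N) #|CD I|.

Lemma max_cellsP (rho : nat) (I : {set T}) :
  I != set0 -> (#|I| <= rho)%N -> (#|CD I| <= max_cells rho)%N.
Proof. by move=> In0 Irho; apply: (leq_bigmax_cond I); rewrite In0. Qed.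

Lemma max_cells_le (alpha beta : R) (rho : nat) :
  (forall m : nat, (0 < m)%N ->
     INR (local_growth CD m) <= Rpower 2 alpha * Rpower (INR m) beta) ->
  0 <= beta ->
  INR (max_cells rho) <= Rpower 2 alpha * Rpower (INR rho) beta.
Proof.
move=> growth beta_ge0; rewrite /max_cells.
elim/big_ind: _ => [|x y hx hy|I /andP [In0 Irho]].
- by apply: Rlt_le; apply: Rmult_lt_0_compat; apply: exp_pos.
- by rewrite /maxn; case: ifP.
have I_gt0 : (0 < #|I|)%N by rewrite card_gt0.
have cells_le : (#|CD I| <= local_growth CD #|I|)%N.
  exact: (@leq_bigmax_cond _ (fun I' : {set T} => #|I'| == #|I|) _ I).
apply: Rle_trans (INR_leq cells_le) _.
apply: Rle_trans (growth _ I_gt0) _; apply: Rmult_le_compat_l.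
  by apply: Rlt_le; apply: exp_pos.
apply: Rle_Rpower_l => //; split; last exact: INR_leq.
by apply: lt_0_INR; apply/ltP.
Qed.

Definition max_free (r : R) : nat := \max_(s | heavy r s) (#|T| - #|K s|).

Lemma max_freeP (r : R) (s : C) : heavy r s -> (#|T| - #|K s| <= max_free r)%N.
Proof. exact: leq_bigmax_cond. Qed.

Lemma max_free_le (r : R) : 1 <= r -> INR (max_free r) <= INR #|T| - INR #|T| / r.
Proof.
move=> r_ge1; have n_ge0 := pos_INR #|T|.
have n_div_r : INR #|T| / r <= INR #|T|.
  apply: (Rmult_le_reg_r r); first lra.
  by rewrite /Rdiv Rmult_assoc Rinv_l; nra.
rewrite /max_free; elim/big_ind: _ => [|x y hx hy|s].
- by change (INR 0) with 0; lra.
- by rewrite /maxn; case: ifP.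
rewrite /heavy; case: Rle_dec => // /Rnot_le_lt K_gt _.
by rewrite -minusE minus_INR; [lra | apply/leP; apply: max_card].
Qed.

End Cuttings.

Lemma shrink_factor_pos (r : R) : 1 < r -> 0 < 1 - 2 / (3 * r).
Proof.
move=> r_gt1; have : 2 / (3 * r) < 1.
  by apply: (Rmult_lt_reg_r (3 * r)); [lra | field_simplify; lra].
lra.
Qed.

Lemma failure_ratio_le (n NF U0 N0 b rho : nat) (r : R) :
  (0 < n)%N -> 0 < r -> INR N0 <= INR n - INR n / r ->
  (NF * 3 ^ (rho - b) <= U0 * (n + 2 * N0) ^ rho)%N ->
  INR NF / INR (n ^ rho) <= INR U0 * (3 ^ b * (1 - 2 / (3 * r)) ^ rho).
Proof.
move=> n_gt0 r_gt0 N0_le count; set c := 1 - 2 / (3 * r).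
have I3 : INR 3 = 3 by rewrite /=; lra.
have I2 : INR 2 = 2 by rewrite /=; lra.
have n_pos : 0 < INR n by apply: lt_0_INR; apply/ltP.
have NF_ge0 := pos_INR NF; have U0_ge0 := pos_INR U0; have N0_ge0 := pos_INR N0.
have B_ge0 : 0 <= 3 ^ b by apply: pow_le; lra.
have P_pos : 0 < 3 ^ rho by apply: pow_lt; lra.
have Y_pos : 0 < INR n ^ rho by apply: pow_lt.
have pow3 : 3 ^ rho <= 3 ^ (rho - b) * 3 ^ b.
  have : (3 ^ rho <= 3 ^ (rho - b) * 3 ^ b)%N by rewrite -expnD leq_pexp2l //; lia.
  by move/INR_leq; rewrite INR_muln !INR_expn I3.
move/INR_leq: count; rewrite !INR_muln !INR_expn INR_addn INR_muln I2 I3 => count.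
have base : (INR n + 2 * INR N0) ^ rho <= 3 ^ rho * INR n ^ rho * c ^ rho.
  rewrite -!Rpow_mult_distr; apply: pow_incr; split; first lra.
  have -> : 3 * INR n * c = 3 * INR n - 2 * (INR n / r) by rewrite /c; field; lra.
  lra.
have h1 := Rmult_le_compat_l _ _ _ NF_ge0 pow3.
have h2 := Rmult_le_compat_r _ _ _ B_ge0 count.
have h3 := Rmult_le_compat_r _ _ _ B_ge0 (Rmult_le_compat_l _ _ _ U0_ge0 base).
apply: (Rmult_le_reg_r (INR n ^ rho * 3 ^ rho)); first exact: Rmult_lt_0_compat.
have -> : INR NF / INR n ^ rho * (INR n ^ rho * 3 ^ rho) = INR NF * 3 ^ rho.
  by field; lra.
lra.
Qed.

Lemma ln_le_sub1 (x : R) : 0 < x -> ln x <= x - 1.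
Proof. by move=> x_pos; have := exp_ineq1_le (ln x); rewrite exp_ln //; lra. Qed.

Lemma exp_le_exp (x y : R) : x <= y -> exp x <= exp y.
Proof.
by case/Rle_lt_or_eq_dec => [/exp_increasing/Rlt_le // | ->]; apply: Rle_refl.
Qed.

Lemma sample_size_pos (r beta rho : R) :
  1 < r -> 1 <= beta -> 8 * r * beta * ln (4 * r * beta) <= rho -> 0 < rho.
Proof.
move=> r_gt1 beta_ge1 rho_ge.
have : 0 < ln (4 * r * beta) by rewrite -ln_1; apply: ln_increasing; nra.
have : 0 < 8 * r * beta by nra.
nra.
Qed.

Lemma beta_ln_le (r beta rho : R) :
  1 < r -> 1 <= beta -> 8 * r * beta * ln (4 * r * beta) <= rho ->
  beta * (ln 2 + ln rho) <= 5 * rho / (12 * r).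
Proof.
move=> r_gt1 beta_ge1 rho_ge; set a := 4 * r * beta; set L := ln a; set y := rho / a.
have a_gt4 : 4 < a by rewrite /a; nra.
have L_gt1 : 1 < L.
  rewrite /L -[1](ln_exp 1); apply: ln_increasing; first exact: exp_pos.
  by have := exp_le_3; lra.
have y_ge : 2 * L <= y.
  apply: (Rmult_le_reg_r a); first lra.
  have -> : y * a = rho by rewrite /y; field; lra.
  by rewrite /L /a; lra.
have rho_eq : rho = a * y by rewrite /y; field; lra.
have ln_rho : ln rho = L + ln y by rewrite rho_eq ln_mult //; lra.
(* split [ln y] as [ln 2 + ln L + ln (y / (2 L))] and bound the last two by [ln x <= x - 1] *)
have ln_y : ln y <= ln 2 + L - 2 + y / 2.
  have q_pos : 0 < y / (2 * L) by apply: Rdiv_lt_0_compat; lra.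
  have -> : ln y = ln 2 + ln L + ln (y / (2 * L)).
    by rewrite -!ln_mult; [congr ln; field | | | |]; lra.
  have := @ln_le_sub1 L ltac:(lra); have := ln_le_sub1 q_pos.
  have : y / (2 * L) <= y / 2.
    by apply: Rmult_le_compat_l; [lra | apply: Rinv_le_contravar; lra].
  lra.
have ln2_lt1 : ln 2 < 1.
  rewrite -[1](ln_exp 1); apply: ln_increasing; first lra.
  by have := exp_ineq1 1; lra.
have -> : 5 * rho / (12 * r) = beta * (5 * y / 3) by rewrite rho_eq /a; field; lra.
by rewrite ln_rho; apply: Rmult_le_compat_l; lra.
Qed.

Lemma tail_bound_le (b rho : nat) (alpha beta r phi : R) :
  1 <= beta -> 1 < r -> 0 < phi ->
  4 * r * (INR b * ln 3 + (alpha - beta) * ln 2 + ln (1 / phi)) <= INR rho ->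
  8 * r * beta * ln (4 * r * beta) <= INR rho ->
  Rpower 2 alpha * Rpower (INR rho) beta * (3 ^ b * (1 - 2 / (3 * r)) ^ rho) <= phi.
Proof.
move=> beta_ge1 r_gt1 phi_pos rho_ge1 rho_ge2.
have rho_pos := sample_size_pos r_gt1 beta_ge1 rho_ge2.
have c_pos := shrink_factor_pos r_gt1.
rewrite -!Rpower_pow ?c_pos //; last lra.
rewrite /Rpower -!exp_plus -[phi](exp_ln phi) //; apply: exp_le_exp.
have ln_c : ln (1 - 2 / (3 * r)) <= - (2 / (3 * r)) by have := ln_le_sub1 c_pos; lra.
have ln_phi : ln (1 / phi) = - ln phi by rewrite /Rdiv Rmult_1_l ln_Rinv.
have := beta_ln_le r_gt1 beta_ge1 rho_ge2.
have : INR rho * ln (1 - 2 / (3 * r)) <= - (2 * INR rho / (3 * r)).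
  have -> : - (2 * INR rho / (3 * r)) = INR rho * - (2 / (3 * r)) by field; lra.
  by apply: Rmult_le_compat_l; lra.
have : INR b * ln 3 + (alpha - beta) * ln 2 - ln phi <= INR rho / (4 * r).
  apply: (Rmult_le_reg_l (4 * r)); first lra.
  have -> : 4 * r * (INR rho / (4 * r)) = INR rho by field; lra.
  by rewrite ln_phi in rho_ge1; lra.
(* the three exponents add up to rho/(4r) + 5rho/(12r) - 2rho/(3r) = 0 *)
have : INR rho / (4 * r) + 5 * INR rho / (12 * r) - 2 * INR rho / (3 * r) = 0 by field; lra.
nra.
Qed.

Theorem mainTheorem3 (T C : finType) (CD : {set T} -> {set C}) (D : C -> {set T})
  (b : nat) (alpha beta r phi : R) (rho : nat) :
  (0 < #|T|)%N ->
  comb_dim CD b ->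
  def_set_choice CD D ->
  complies CD D ->
  (forall m : nat, (0 < m)%N ->
     INR (local_growth CD m) <= Rpower 2 alpha * Rpower (INR m) beta) ->
  1 <= beta ->
  1 < r ->
  0 < phi < 1 ->
  Rmax (4 * r * (INR b * ln 3 + (alpha - beta) * ln 2 + ln (1 / phi)))
       (8 * r * beta * ln (4 * r * beta)) <= INR rho ->
  1 - phi <= prob_cutting CD D r rho.
Proof.
move=> n_gt0 [b_gt0 dim_b _] _ compl growth beta_ge1 r_gt1 [phi_pos _] rho_ge.
have rho_ge1 := Rle_trans _ _ _ (Rmax_l _ _) rho_ge.
have rho_ge2 := Rle_trans _ _ _ (Rmax_r _ _) rho_ge.
have rho_gt0 : (0 < rho)%N.
  by apply/ltP; apply: INR_lt; apply: sample_size_pos r_gt1 beta_ge1 rho_ge2.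
have count := card_bad_samples_le (Ordinal rho_gt0) b_gt0 dim_b compl
                (@max_cellsP _ _ CD rho) (@max_freeP _ _ CD D r).
have ratio := failure_ratio_le n_gt0 (Rlt_trans _ _ _ Rlt_0_1 r_gt1)
                (max_free_le CD D (Rlt_le _ _ r_gt1)) count.
have cells_le := max_cells_le rho growth (Rle_trans _ _ _ Rle_0_1 beta_ge1).
have c_pos := shrink_factor_pos r_gt1.
have tail_ge0 : 0 <= 3 ^ b * (1 - 2 / (3 * r)) ^ rho.
  by apply: Rmult_le_pos; apply: pow_le; lra.
have := Rmult_le_compat_r _ _ _ tail_ge0 cells_le.
have := tail_bound_le beta_ge1 r_gt1 phi_pos rho_ge1 rho_ge2.
rewrite prob_cutting_complement //; lra.
Qed.
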